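(* Let $\mathbb{K}\subset\mathbb{K}'$ be an algebraically pure field extension where $\mathbb{K}$ is $\aleph_0$-complete. Let $x=(x_1,\ldots,x_n)$, $Y=(Y_1,\ldots,Y_m)$ and $f\in\mathbb{K}[\![x]\!][Y]^r$. Assume that there exists a solution $\hat y\in\mathbb{K}'[\![x]\!]^m$ of $f=0$ such that $\hat y_i\in\mathbb{K}'[\![x_{J_i}]\!]$ for some subsets $J_i\subset\{1,\ldots,n\}$, $i=1,\ldots,m$. Then there is a solution $y\in\mathbb{K}[\![x]\!]^m$ of $f=0$ such that $y_i\in\mathbb{K}[\![x_{J_i}]\!]$ and $\mathrm{ord}(y_i)=\mathrm{ord}(\hat y_i)$ for all $i=1,\ldots,m$.
   Context: A field extension $\mathbb{K}\subset\mathbb{K}'$ is algebraically pure if every finite system of polynomial equations with coefficients in $\mathbb{K}$ that has a solution in $\mathbb{K}'$ has a solution in $\mathbb{K}$. A field $\mathbb{K}$ is called $\aleph_0$-complete if every countable system $\mathcal S$ of polynomial equations with coefficients in $\mathbb{K}$ (in a countable number of indeterminates) has a solution in $\mathbb{K}$ if and only if every finite sub-system of $\mathcal S$ has a solution in $\mathbb{K}$. For a field $L$ and $J\subset\{1,\ldots,n\}$, $L[\![x_J]\!]$ denotes the ring of formal power series in the variables $x_j$, $j\in J$, viewed inside $L[\![x]\!]$. For a power series $g$, $\mathrm{ord}(g)$ is the smallest total degree of a monomial appearing in $g$ with nonzero coefficient ($\mathrm{ord}(0)=\infty$). *)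

From HB Require Import structures.
From mathcomp Require Import all_boot all_order all_algebra.
From mathcomp Require Import mpoly.
From Stdlib Require Import ClassicalEpsilon.

Set Implicit Arguments.
Unset Strict Implicit.
Unset Printing Implicit Defensive.

Import Order.TTheory GRing.Theory.
Local Open Scope ring_scope.

(* The extension K ⊂ K' is given by a (necessarily injective) field morphism
   phi. *)
Definition alg_pure (K K' : fieldType) (phi : {rmorphism K -> K'}) : Prop :=
  forall (N : nat) (S : seq {mpoly K[N]}),
    (exists v : 'I_N -> K', forall p, p \in S -> (map_mpoly phi p).@[v] = 0) ->
    exists v : 'I_N -> K, forall p, p \in S -> p.@[v] = 0.

(* A countable system in countably many indeterminates X_0, X_1, ...:
   the k-th equation is a polynomial in the first N_k indeterminates. *)
Definition csys (K : fieldType) := nat -> {N : nat & {mpoly K[N]}}.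

Definition csys_eval (K : fieldType) (S : csys K) (k : nat) (x : nat -> K) : K :=
  (projT2 (S k)).@[fun i : 'I_(projT1 (S k)) => x (nat_of_ord i)].

Definition aleph0_complete (K : fieldType) : Prop :=
  forall S : csys K,
    (exists x : nat -> K, forall k, csys_eval S k x = 0) <->
    (forall F : seq nat, exists x : nat -> K, forall k, k \in F -> csys_eval S k x = 0).

Definition ps (R : nzRingType) (n : nat) := 'X_{1..n} -> R.

Section PS.
Variables (R : nzRingType) (n : nat).

Definition ps_zero : ps R n := fun _ => 0.
Definition ps_one : ps R n := fun a => if a == 0%MM then 1 else 0.
Definition ps_add (f g : ps R n) : ps R n := fun a => f a + g a.

Definition ps_mul (f g : ps R n) : ps R n := fun a =>
  \sum_(b : 'X_{1..n < (mdeg a).+1} | (bmnm b <= a)%MM) f b * g (a - bmnm b)%MM.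

Definition ps_exp (f : ps R n) (k : nat) : ps R n := iter k (ps_mul f) ps_one.

Definition ps_in_vars (J : {set 'I_n}) (f : ps R n) : Prop :=
  forall a : 'X_{1..n}, f a != 0 -> forall i : 'I_n, a i != 0%N -> i \in J.

Definition ps_has_deg (f : ps R n) (k : nat) : bool :=
  [exists b : 'X_{1..n < k.+1}, (mdeg (bmnm b) == k) && (f b != 0)].

(* ord f : Some (least total degree of a monomial of f), None (= infinity)
   for f = 0. *)
Definition ps_ord (f : ps R n) : option nat :=
  match excluded_middle_informative (exists k, ps_has_deg f k) with
  | left H => Some (ex_minn H)
  | right _ => None
  end.

End PS.

Definition ps_map (K K' : nzRingType) (phi : K -> K') (n : nat) (f : ps K n)
  : ps K' n := fun a => phi (f a).

(* A polynomial P in K[[x]][Y_1..Y_m] of total degree < d, given by its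
   coefficients: P e is the coefficient of Y^e. *)
Definition pspoly (R : nzRingType) (n m d : nat) := 'X_{1..m < d} -> ps R n.

Definition ps_Ymon (R : nzRingType) (n m : nat) (y : 'I_m -> ps R n)
  (e : 'X_{1..m}) : ps R n :=
  foldr (fun i acc => ps_mul (ps_exp (y i) (e i)) acc) (@ps_one R n) (enum 'I_m).

Definition pspoly_eval (R : nzRingType) (n m d : nat) (P : pspoly R n m d)
  (y : 'I_m -> ps R n) : ps R n := fun a =>
  \sum_(e : 'X_{1..m < d}) ps_mul (P e) (ps_Ymon y (bmnm e)) a.

Definition pspoly_map (K K' : nzRingType) (phi : K -> K') (n m d : nat)
  (P : pspoly K n m d) : pspoly K' n m d := fun e => ps_map phi (P e).

(* The unknowns are the coefficients y_(i,b) of the power series y_i, together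
   with an inverse witness w_(i,b) for every nonzero coefficient of yh_i.  The
   equations "coefficient of x^a in f_j(y) is 0", "y_(i,a) = 0" when
   yh_(i,a) = 0, and "y_(i,a) w_(i,a) = 1" otherwise form a countable system
   over K; each equation involves finitely many unknowns, since the coefficient
   of x^a in f_j(y) only depends on coefficients of y of degree at most |a|.
   The coefficients of yh solve it in K', so purity solves every finite
   subsystem in K and aleph_0-completeness solves the whole system in K.  The
   resulting y has the same support as yh, hence lies in the same K[[x_J]] and
   has the same orders. *)
From HB Require Import structures.
From mathcomp Require Import all_boot all_order all_algebra.
From mathcomp Require Import mpoly.
From Stdlib Require Import FunctionalExtensionality ClassicalEpsilon.

Set Implicit Arguments.
Unset Strict Implicit.
Unset Printing Implicit Defensive.

Import Order.TTheory GRing.Theory.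
Local Open Scope ring_scope.

Section PsMorphism.
Variables (R S : nzRingType) (g : {rmorphism R -> S}) (n : nat).

Lemma ps_map_mul (f h : ps R n) :
  ps_map g (ps_mul f h) = ps_mul (ps_map g f) (ps_map g h).
Proof.
apply: functional_extensionality => a; rewrite /ps_map /ps_mul rmorph_sum.
by apply: eq_bigr => b _; rewrite rmorphM.
Qed.

Lemma ps_map_one : ps_map g (@ps_one R n) = @ps_one S n.
Proof.
apply: functional_extensionality => a; rewrite /ps_map /ps_one.
by case: (a == 0%MM); rewrite ?rmorph1 ?rmorph0.
Qed.

Lemma ps_map_exp (f : ps R n) k : ps_map g (ps_exp f k) = ps_exp (ps_map g f) k.
Proof. by elim: k => [|k IHk] /=; rewrite ?ps_map_one // ps_map_mul IHk. Qed.

Lemma ps_map_Ymon m (y : 'I_m -> ps R n) e :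
  ps_map g (ps_Ymon y e) = ps_Ymon (fun i => ps_map g (y i)) e.
Proof.
rewrite /ps_Ymon; elim: (enum 'I_m) => [|i s IHs] /=; first exact: ps_map_one.
by rewrite ps_map_mul IHs ps_map_exp.
Qed.

Lemma pspoly_eval_map m d (P : pspoly R n m d) (y : 'I_m -> ps R n) :
  ps_map g (pspoly_eval P y) =
  pspoly_eval (pspoly_map g P) (fun i => ps_map g (y i)).
Proof.
apply: functional_extensionality => a; rewrite /ps_map /pspoly_eval rmorph_sum.
by apply: eq_bigr => e _; rewrite -ps_map_Ymon -ps_map_mul.
Qed.

End PsMorphism.

Section PsTruncation.
Variables (R : nzRingType) (n D : nat).

Definition ps_eq_upto (f f' : ps R n) :=
  forall b : 'X_{1..n}, (mdeg b <= D)%N -> f b = f' b.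

Lemma mdeg_lepm (a b : 'X_{1..n}) : (b <= a)%MM -> (mdeg b <= mdeg a)%N.
Proof. by move=> le_ba; rewrite -(submK le_ba) mdegD leq_addl. Qed.

Lemma ps_mul_eq_upto f f' h h' :
  ps_eq_upto f f' -> ps_eq_upto h h' -> ps_eq_upto (ps_mul f h) (ps_mul f' h').
Proof.
move=> eq_f eq_h a le_aD; apply: eq_bigr => b le_ba.
rewrite eq_f ?eq_h //; first exact: leq_trans (mdegB _ _) le_aD.
exact: leq_trans (mdeg_lepm le_ba) le_aD.
Qed.

Lemma ps_exp_eq_upto f f' k :
  ps_eq_upto f f' -> ps_eq_upto (ps_exp f k) (ps_exp f' k).
Proof. by move=> eq_f; elim: k => [|k IHk] //=; apply: ps_mul_eq_upto. Qed.

Lemma ps_Ymon_eq_upto m (y y' : 'I_m -> ps R n) e :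
  (forall i, ps_eq_upto (y i) (y' i)) ->
  ps_eq_upto (ps_Ymon y e) (ps_Ymon y' e).
Proof.
move=> eq_y; rewrite /ps_Ymon; elim: (enum 'I_m) => [|i s IHs] //=.
exact/ps_mul_eq_upto/IHs/ps_exp_eq_upto.
Qed.

Lemma pspoly_eval_eq_upto m d (P : pspoly R n m d) (y y' : 'I_m -> ps R n) :
  (forall i, ps_eq_upto (y i) (y' i)) ->
  ps_eq_upto (pspoly_eval P y) (pspoly_eval P y').
Proof.
move=> eq_y a le_aD; apply: eq_bigr => e _.
by apply: ps_mul_eq_upto => //; apply: ps_Ymon_eq_upto.
Qed.

End PsTruncation.

Section PsSupport.
Variables (R R' : nzRingType) (n : nat) (p : ps R n) (q : ps R' n).
Hypothesis eq_supp : forall a, (p a != 0) = (q a != 0).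

Lemma eq_ps_in_vars J : ps_in_vars J q -> ps_in_vars J p.
Proof. by move=> vars_q a; rewrite eq_supp; apply: vars_q. Qed.

Lemma eq_ps_ord : ps_ord p = ps_ord q.
Proof.
have eq_deg k : ps_has_deg p k = ps_has_deg q k.
  by apply: eq_existsb => b; rewrite eq_supp.
rewrite /ps_ord.
case: excluded_middle_informative => [p_deg|p_deg];
  case: excluded_middle_informative => [q_deg|q_deg].
- congr Some; case: ex_minnP => k1 p_k1 min1; case: ex_minnP => k2 q_k2 min2.
  by apply/eqP; rewrite eqn_leq min1 ?eq_deg // min2 // -eq_deg.
- by case: q_deg; case: p_deg => k; exists k; rewrite -eq_deg.
- by case: p_deg; case: q_deg => k; exists k; rewrite eq_deg.
- by [].
Qed.

End PsSupport.

(* Junk value [0] when [N <= l]. *)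
Definition mvar (R : nzRingType) (N l : nat) : {mpoly R[N]} :=
  if (insub l : option 'I_N) is Some i then 'X_i else 0.

Lemma meval_mvar (R : comNzRingType) N (xs : nat -> R) l :
  (l < N)%N -> (mvar R N l).@[fun i : 'I_N => xs i] = xs l.
Proof. by move=> lt_lN; rewrite /mvar insubT mevalXU. Qed.

Lemma map_mvar (R S : nzRingType) (h : {rmorphism R -> S}) N l :
  map_mpoly h (mvar R N l) = mvar S N l.
Proof. by rewrite /mvar; case: insub => [i|]; rewrite ?map_mpolyX ?raddf0. Qed.

Definition mwiden (R : nzRingType) k N (p : {mpoly R[k]}) : {mpoly R[N]} :=
  p \mPo [tuple mvar R N i | i < k].

Lemma meval_mwiden (R : comNzRingType) k N (p : {mpoly R[k]}) (xs : nat -> R) :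
  (k <= N)%N ->
  (mwiden N p).@[fun i : 'I_N => xs i] = p.@[fun i : 'I_k => xs i].
Proof.
move=> le_kN; rewrite comp_mpoly_meval; apply: meval_eq => i.
by rewrite tnth_mktuple meval_mvar // (leq_trans (ltn_ord i)).
Qed.

Lemma map_mwiden (K K' : fieldType) (phi : {rmorphism K -> K'}) k N
    (p : {mpoly K[k]}) :
  map_mpoly phi (mwiden N p) = mwiden N (map_mpoly phi p).
Proof.
rewrite /mwiden map_mpoly_comp; last exact: fmorph_inj.
congr (_ \mPo _); apply: eq_from_tnth => i.
by rewrite tnth_map !tnth_mktuple map_mvar.
Qed.

Lemma csys_transfer (K K' : fieldType) (phi : {rmorphism K -> K'}) :
  alg_pure phi -> aleph0_complete K ->
  forall S : csys K,
    (exists x' : nat -> K',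
       forall k, (map_mpoly phi (projT2 (S k))).@[fun i => x' i] = 0) ->
  exists x : nat -> K, forall k, csys_eval S k x = 0.
Proof.
move=> pure complete S [x' sol_x']; apply/complete => F.
pose N := (\max_(k <- F) projT1 (S k))%N.
have le_N k : k \in F -> (projT1 (S k) <= N)%N.
  by move=> kF; apply: leq_bigmax_seq.
have [v sol_v] : exists v : 'I_N -> K,
    forall p, p \in [seq mwiden N (projT2 (S k)) | k <- F] -> p.@[v] = 0.
  apply: pure; exists (fun i => x' i) => _ /mapP[k kF ->].
  by rewrite map_mwiden meval_mwiden ?le_N.
pose x l := if (insub l : option 'I_N) is Some i then v i else 0.
exists x => k kF; rewrite /csys_eval -(meval_mwiden _ x (le_N k kF)).
by rewrite -[RHS](sol_v _ (map_f _ kF)); apply: meval_eq => i; rewrite /x valK.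
Qed.

Section CoefficientSystem.
Variables (K : fieldType) (n m r d : nat) (f : 'I_r -> pspoly K n m d).
Variable nz : 'I_m -> 'X_{1..n} -> bool.

Definition coef_unknown := (('I_m * 'X_{1..n}) + ('I_m * 'X_{1..n}))%type.
Definition coef_equation := (('I_r * 'X_{1..n}) + ('I_m * 'X_{1..n}))%type.

Definition coef_var i b : nat := pickle (inl (i, b) : coef_unknown).
Definition inv_var i b : nat := pickle (inr (i, b) : coef_unknown).

Definition coef_ps (S : nzRingType) (xs : nat -> S) : 'I_m -> ps S n :=
  fun i b => xs (coef_var i b).

(* [inr (i, a)] makes the coefficient of x^a in y_i vanish exactly when
   [nz i a] is false: when it is true, [inv_var i a] witnesses invertibility. *)
Definition coef_eq (S : nzRingType) (h : K -> S) (xs : nat -> S)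
    (e : coef_equation) : S :=
  match e with
  | inl (j, a) => pspoly_eval (pspoly_map h (f j)) (coef_ps xs) a
  | inr (i, a) =>
      if nz i a then xs (coef_var i a) * xs (inv_var i a) - 1
      else xs (coef_var i a)
  end.

Definition coef_arity (e : coef_equation) : nat :=
  match e with
  | inl (_, a) =>
      (\max_(ib : 'I_m * 'X_{1..n < (mdeg a).+1}) coef_var ib.1 (bmnm ib.2)).+1
  | inr (i, a) => (maxn (coef_var i a) (inv_var i a)).+1
  end.

Lemma coef_eq_rmorph (S T : nzRingType) (h : K -> S) (g : {rmorphism S -> T})
    xs e :
  g (coef_eq h xs e) = coef_eq (g \o h) (g \o xs) e.
Proof.
case: e => [[j a]|[i a]] /=.
  have := pspoly_eval_map g (pspoly_map h (f j)) (coef_ps xs).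
  by move/(congr1 (fun F => F a)).
by case: (nz i a); rewrite ?rmorphB ?rmorphM ?rmorph1.
Qed.

Lemma coef_eq_local (S : nzRingType) (h : K -> S) (xs xs' : nat -> S) e :
  (forall l, (l < coef_arity e)%N -> xs l = xs' l) ->
  coef_eq h xs e = coef_eq h xs' e.
Proof.
case: e => [[j a]|[i a]] /= eq_xs; last first.
  by rewrite !eq_xs // ltnS ?leq_maxl ?leq_maxr.
apply: (pspoly_eval_eq_upto (D := mdeg a)) => // i b le_ba.
rewrite /coef_ps eq_xs // ltnS.
exact: (leq_bigmax (F := fun ib : 'I_m * 'X_{1..n < (mdeg a).+1} =>
  coef_var ib.1 (bmnm ib.2)) (i, BMultinom (le_ba : (mdeg b < (mdeg a).+1)%N))).
Qed.

Lemma coef_eq_mvar (T : nzRingType) N (g : {rmorphism {mpoly K[N]} -> T})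
    (xs : nat -> T) e :
  (coef_arity e <= N)%N -> (forall l, (l < N)%N -> g (mvar K N l) = xs l) ->
  g (coef_eq (@mpolyC N K) (mvar K N) e) = coef_eq (g \o @mpolyC N K) xs e.
Proof.
move=> le_eN g_mvar; rewrite coef_eq_rmorph; apply: coef_eq_local => l lt_le.
exact/g_mvar/(leq_trans lt_le).
Qed.

Definition coef_csys : csys K := fun k =>
  if (unpickle k : option coef_equation) is Some e then
    existT _ (coef_arity e) (coef_eq (@mpolyC _ K) (mvar K _) e)
  else existT _ 0%N (0 : {mpoly K[0]}).

Lemma csys_eval_coef_csys (x : nat -> K) k :
  csys_eval coef_csys k x =
  if (unpickle k : option coef_equation) is Some e then coef_eq id x e else 0.
Proof.
rewrite /csys_eval /coef_csys; case: unpickle => [e|] /=; last exact: meval0.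
rewrite (coef_eq_mvar (g := meval _) (xs := x)) // => [|l lt_le].
  by congr coef_eq; apply: functional_extensionality => c; rewrite /= mevalC.
exact: meval_mvar.
Qed.

Lemma meval_map_coef_csys (K' : fieldType) (phi : {rmorphism K -> K'})
    (x' : nat -> K') k :
  (map_mpoly phi (projT2 (coef_csys k))).@[fun i => x' i] =
  if (unpickle k : option coef_equation) is Some e then coef_eq phi x' e else 0.
Proof.
rewrite /coef_csys; case: unpickle => [e|] /=; last by rewrite raddf0 meval0.
rewrite -[LHS]/((meval _ \o map_mpoly phi) _).
rewrite (coef_eq_mvar (g := meval _ \o map_mpoly phi) (xs := x')) //.
  by congr coef_eq; apply: functional_extensionality => c;
    rewrite /= map_mpolyC mevalC.
by move=> l lt_le; rewrite /= map_mvar meval_mvar.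
Qed.

Lemma coef_eqs_of_sol (L : fieldType) (h : K -> L) (y : 'I_m -> ps L n) :
  (forall j, pspoly_eval (pspoly_map h (f j)) y = @ps_zero L n) ->
  (forall i a, nz i a = (y i a != 0)) ->
  exists xs : nat -> L, forall e, coef_eq h xs e = 0.
Proof.
move=> sol_y nz_y.
pose xs l := match (unpickle l : option coef_unknown) with
  | Some (inl (i, b)) => y i b
  | Some (inr (i, b)) => (y i b)^-1
  | None => 0 end.
have coef_ps_xs : coef_ps xs = y.
  apply: functional_extensionality => i; apply: functional_extensionality => b.
  by rewrite /coef_ps /xs /coef_var pickleK.
exists xs => -[[j a]|[i a]] /=; first by rewrite coef_ps_xs sol_y.
rewrite nz_y /xs /coef_var /inv_var !pickleK.
by have [->|y_neq0] := eqVneq (y i a) 0; rewrite ?eqxx // divff ?subrr.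
Qed.

Lemma sol_of_coef_eqs (L : nzRingType) (h : K -> L) (xs : nat -> L) :
  (forall e, coef_eq h xs e = 0) ->
  (forall j, pspoly_eval (pspoly_map h (f j)) (coef_ps xs) = @ps_zero L n) /\
  (forall i a, (coef_ps xs i a != 0) = nz i a).
Proof.
move=> sol_xs; split=> [j|i a].
  by apply: functional_extensionality => a; apply: (sol_xs (inl (j, a))).
have /eqP := sol_xs (inr (i, a)); rewrite /= /coef_ps.
case: (nz i a) => [|/eqP ->]; last by rewrite eqxx.
by rewrite subr_eq0; apply: contraTneq => ->; rewrite mul0r eq_sym oner_eq0.
Qed.

End CoefficientSystem.

Theorem theorem3p5 (K K' : fieldType) (phi : {rmorphism K -> K'})
  (Hpure : alg_pure phi) (Hcomp : aleph0_complete K)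
  (n m r d : nat) (f : 'I_r -> pspoly K n m d) (J : 'I_m -> {set 'I_n})
  (yh : 'I_m -> ps K' n) :
  (forall j : 'I_r, pspoly_eval (pspoly_map phi (f j)) yh = @ps_zero K' n) ->
  (forall i : 'I_m, ps_in_vars (J i) (yh i)) ->
  exists y : 'I_m -> ps K n,
    (forall j : 'I_r, pspoly_eval (f j) y = @ps_zero K n) /\
    (forall i : 'I_m, ps_in_vars (J i) (y i) /\ ps_ord (y i) = ps_ord (yh i)).
Proof.
move=> sol_yh vars_yh.
pose nz i a := yh i a != 0.
have [x' sol_x'] := coef_eqs_of_sol (nz := nz) sol_yh (fun _ _ => erefl).
have [x sol_x] : exists x, forall k, csys_eval (coef_csys f nz) k x = 0.
  apply: (csys_transfer Hpure Hcomp); exists x' => k.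
  by rewrite meval_map_coef_csys; case: unpickle.
have coef_x e : coef_eq f nz id x e = 0.
  by have := sol_x (pickle e); rewrite csys_eval_coef_csys pickleK.
have [sol_y supp_y] := sol_of_coef_eqs coef_x.
exists (coef_ps x); split=> [j|i]; first exact: sol_y.
split; [exact: eq_ps_in_vars (supp_y i) _ (vars_yh i) | exact: eq_ps_ord].
Qed.
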